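(* Let $A,B\subset\mathbb R^p$ be two disjoint compact sets of Lebesgue measure $0$, and let $C\in\mathbb R$. Then the set $D=\{\mathbf x\in\mathbb R^p: d(\mathbf x,A)^2-d(\mathbf x,B)^2=C\}$ has Lebesgue measure $0$.
   Context: For $\mathbf x\in\mathbb R^p$ and $A\subset\mathbb R^p$, $d(\mathbf x,A)=\inf_{\mathbf y\in A}\|\mathbf x-\mathbf y\|$ (Euclidean distance). *)

(* R^p is 'rV[R]_p for R : realType. *)
From HB Require Import structures.
From mathcomp Require Import all_boot all_order all_algebra.
From mathcomp Require Import all_classical all_reals all_analysis.
Set Implicit Arguments. Unset Strict Implicit. Unset Printing Implicit Defensive.
Import Order.TTheory GRing.Theory Num.Theory.
Import numFieldTopology.Exports numFieldNormedType.Exports.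
Local Open Scope ring_scope.
Local Open Scope classical_set_scope.

Definition edist (R : realType) (p : nat) (x y : 'rV[R]_p) : R :=
  Num.sqrt (\sum_(i < p) (x ord0 i - y ord0 i) ^+ 2).

Definition setdist (R : realType) (p : nat) (x : 'rV[R]_p) (A : set 'rV[R]_p) : R :=
  inf [set edist x y | y in A].

Definition box (R : realType) (p : nat) (a b : 'rV[R]_p) : set 'rV[R]_p :=
  [set x | forall i : 'I_p, a ord0 i <= x ord0 i <= b ord0 i].
Definition box_vol (R : realType) (p : nat) (a b : 'rV[R]_p) : R :=
  \prod_(i < p) (b ord0 i - a ord0 i).

Definition lebesgue_null (R : realType) (p : nat) (S : set 'rV[R]_p) : Prop :=
  forall eps : R, 0 < eps ->
    exists a b : nat -> 'rV[R]_p,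
      (forall n (i : 'I_p), a n ord0 i <= b n ord0 i) /\
      S `<=` \bigcup_n box (a n) (b n) /\
      (forall N : nat, \sum_(n < N) box_vol (a n) (b n) <= eps).

From HB Require Import structures.
From mathcomp Require Import all_boot all_order all_algebra.
From mathcomp Require Import all_classical all_reals all_analysis.
From mathcomp Require Import ring lra.
Import Order.TTheory GRing.Theory Num.Theory.
Import numFieldTopology.Exports numFieldNormedType.Exports.
Local Open Scope ring_scope.
Local Open Scope classical_set_scope.

(* Level sets of d(x,A)^2 - d(x,B)^2 are Lebesgue-null, for A, B nonempty,
   compact and disjoint.

   Write a(x), b(x) for nearest points of A, B to x and g(x) = |x - a(x)|^2 -
   |x - b(x)|^2.  Minimality of a(y) and b(x) gives the one-sided estimate
   g(y) - g(x) <= 2 <y - x, b(y) - a(x)>.  Hence if x, y lie on a level set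
   and a(x), a(y) are e-close to a center alpha while b(x), b(y) are e-close
   to beta, then |<y - x, beta - alpha>| <= 2 e |y - x|_1; when moreover
   |beta_i - alpha_i| >= 4 e, the coordinate y_i - x_i is bounded by a
   constant times the other coordinates, i.e. such a piece of the level set
   is a Lipschitz graph over the hyperplane x_i = 0.  Since a(x) != b(x),
   every point of the level set lies in one of countably many such bounded
   pieces (indexed by a scale, a radius, a direction and two grid cells). *)

Section SumFacts.
Context {R : realType}.

Lemma sum_geom_half (eps : R) (M : nat) : 0 <= eps ->
  \sum_(k < M) eps / 2 ^+ k.+1 <= eps.
Proof.
move=> eps0.
suff -> : \sum_(k < M) eps / 2 ^+ k.+1 = eps - eps / 2 ^+ M.
  by rewrite lerBlDr lerDl divr_ge0 // exprn_ge0.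
elim: M => [|M IH]; first by rewrite big_ord0 expr0 divr1 subrr.
have h2 : (2 : R) ^+ M != 0 by rewrite expf_neq0.
by rewrite big_ord_recr /= IH exprS; field; rewrite h2.
Qed.

Lemma sum_subseq_le (T : eqType) (s s' : seq T) (F : T -> R) :
  uniq s -> uniq s' -> {subset s <= s'} -> (forall t, 0 <= F t) ->
  \sum_(t <- s) F t <= \sum_(t <- s') F t.
Proof.
move=> us us' ss' F0.
rewrite [X in _ <= X](bigID (mem s)) /=.
have -> : \sum_(t <- s' | t \in s) F t = \sum_(t <- s) F t.
  rewrite -big_filter; apply/perm_big/uniq_perm; rewrite ?filter_uniq // => t.
  by rewrite mem_filter andb_idr //; apply: ss'.
by rewrite lerDl sumr_ge0.
Qed.

Lemma sum_prefix_le (F : nat -> R) (sz N : nat) :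
  (forall n, 0 <= F n) -> (forall n, (sz <= n)%N -> F n = 0) ->
  \sum_(n < N) F n <= \sum_(n < sz) F n.
Proof.
move=> F0 Fsz; rewrite -!(big_mkord xpredT F).
have [leNsz | ltszN] := leqP N sz.
  by rewrite (big_cat_nat (leq0n N) leNsz) /= lerDl sumr_ge0.
rewrite (big_cat_nat (leq0n sz) (ltnW ltszN)) /= [X in _ + X <= _]big_nat_cond.
by rewrite [X in _ + X <= _]big1 ?addr0 // => n /andP [/andP [/Fsz] ->].
Qed.

Lemma sum_pairs_le (V : nat * nat -> R) (c : nat -> R) (s : seq (nat * nat)) :
  uniq s -> (forall t, 0 <= V t) ->
  (forall k N, \sum_(m < N) V (k, nat_of_ord m) <= c k) ->
  exists M, \sum_(t <- s) V t <= \sum_(k < M) c k.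
Proof.
move=> us V0 Vc; pose M := (\max_(t <- s) maxn t.1 t.2).+1.
have sM t : t \in s -> (t.1 < M)%N /\ (t.2 < M)%N.
  move=> ts; have := @leq_bigmax_seq _ s xpredT
    (fun t : nat * nat => maxn t.1 t.2) t ts isT.
  by rewrite -ltnS => h; split; apply: leq_ltn_trans h; rewrite ?leq_maxl ?leq_maxr.
exists M; pose s' := [seq (k, m) | k <- iota 0 M, m <- iota 0 M].
apply: (@le_trans _ _ (\sum_(t <- s') V t)).
  apply: sum_subseq_le => //.
    by apply: allpairs_uniq; rewrite ?iota_uniq // => -[? ?] [? ?].
  by move=> [k m] /sM /= [hk hm]; apply: allpairs_f; rewrite mem_iota.
rewrite big_allpairs -(big_mkord xpredT c) /index_iota subn0.
apply: ler_sum => k _; have := Vc k M.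
by rewrite -(big_mkord xpredT (fun m => V (k, m))) /index_iota subn0.
Qed.

End SumFacts.

Section NullSets.
Context {R : realType} {p : nat}.
Implicit Types (S T : set 'rV[R]_p) (a b : 'rV[R]_p).

Lemma box_vol_ge0 a b : (forall i, a ord0 i <= b ord0 i) -> 0 <= box_vol a b.
Proof. by move=> h; apply: prodr_ge0 => i _; rewrite subr_ge0. Qed.

Lemma null_sub {S T} : S `<=` T -> lebesgue_null T -> lebesgue_null S.
Proof.
move=> ST nT eps eps0; have [a [b [ab [cov vol]]]] := nT eps eps0.
by exists a, b; split=> //; split=> // x /ST /cov.
Qed.

Hypothesis p_gt0 : (0 < p)%N.

(* In positive dimension the box [0, 0] is degenerate; it pads finite covers. *)
Lemma box_vol00 : box_vol (0 : 'rV[R]_p) 0 = 0.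
Proof.
rewrite /box_vol; case: p p_gt0 => // q _.
by rewrite big_ord_recl !mxE subrr mul0r.
Qed.

Lemma null_set0 : lebesgue_null (set0 : set 'rV[R]_p).
Proof.
move=> eps eps0; exists (fun=> 0), (fun=> 0); split; [by move=> n i; rewrite mxE|].
by split=> // N; rewrite big1 ?ltW // => n _; rewrite box_vol00.
Qed.

Lemma null_of_finite_covers S :
  (forall eps, 0 < eps -> exists (I : finType) (a b : I -> 'rV[R]_p),
     (forall k i, a k ord0 i <= b k ord0 i) /\
     S `<=` \bigcup_(k in [set: I]) box (a k) (b k) /\
     \sum_k box_vol (a k) (b k) <= eps) ->
  lebesgue_null S.
Proof.
move=> fin eps eps0; have [I [a [b [ab [cov vol]]]]] := fin eps eps0.
pose e := [seq Some k | k <- enum I].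
pose oa n := if nth None e n is Some k then a k else 0.
pose ob n := if nth None e n is Some k then b k else 0.
exists oa, ob; split; [|split].
- by move=> n i; rewrite /oa /ob; case: nth => [k|]; rewrite ?mxE.
- move=> x /cov [k _ xk]; exists (index (Some k) e) => //.
  by rewrite /oa /ob nth_index ?map_f ?mem_enum.
move=> N; apply: le_trans vol.
apply: (@le_trans _ _ (\sum_(n < size e) box_vol (oa n) (ob n))).
  apply: (@sum_prefix_le _ (fun n => box_vol (oa n) (ob n))) => n.
    by apply: box_vol_ge0 => i; rewrite /oa /ob; case: nth => [k|]; rewrite ?mxE.
  by move=> /(nth_default None) en; rewrite /oa /ob en box_vol00.
have -> : \sum_k box_vol (a k) (b k) =
    \sum_(o <- e) (if o is Some k then box_vol (a k) (b k) else 0).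
  by rewrite big_map big_enum.
rewrite (big_nth None) big_mkord le_eqVlt; apply/orP; left; apply/eqP/eq_bigr => n _.
by rewrite /oa /ob; case: nth => [k|] //; exact: box_vol00.
Qed.

Lemma null_bigcup_nat (S : nat -> set 'rV[R]_p) :
  (forall k, lebesgue_null (S k)) -> lebesgue_null (\bigcup_k S k).
Proof.
move=> nS eps eps0.
have /choice [F hF] : forall k, exists ab : (nat -> 'rV[R]_p) * (nat -> 'rV[R]_p),
    (forall n i, ab.1 n ord0 i <= ab.2 n ord0 i) /\
    S k `<=` \bigcup_n box (ab.1 n) (ab.2 n) /\
    (forall N, \sum_(n < N) box_vol (ab.1 n) (ab.2 n) <= eps / 2 ^+ k.+1).
  move=> k; have := nS k _ (divr_gt0 eps0 (exprn_gt0 k.+1 (ltr0Sn R 1))).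
  by move=> [a [b h]]; exists (a, b).
(* Enumerate the boxes of all the covers along a coding of nat * nat. *)
pose a n := if (pickle_inv n : option (nat * nat)) is Some t
            then (F t.1).1 t.2 else 0.
pose b n := if (pickle_inv n : option (nat * nat)) is Some t
            then (F t.1).2 t.2 else 0.
pose V (t : nat * nat) := box_vol ((F t.1).1 t.2) ((F t.1).2 t.2).
exists a, b; split; [|split].
- move=> n i; rewrite /a /b.
  by case: pickle_inv => [t|]; [exact: (hF t.1).1|rewrite mxE].
- move=> x [k _ /((hF k).2.1) [m _ xkm]]; exists (pickle (k, m)) => //.
  by rewrite /a /b pickleK_inv.
move=> N.
have -> : \sum_(n < N) box_vol (a n) (b n) =
    \sum_(t <- pmap (pickle_inv : nat -> option (nat * nat)) (iota 0 N)) V t.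
  rewrite -(big_mkord xpredT (fun n => box_vol (a n) (b n))) /index_iota subn0.
  elim: (iota 0 N) => [|n s IH]; first by rewrite !big_nil.
  rewrite big_cons /= IH /a /b.
  by case: (pickle_inv n) => [t|] /=; rewrite ?big_cons // box_vol00 add0r.
have [|M sumM] := sum_pairs_le V (fun k => eps / 2 ^+ k.+1)
    (pmap (pickle_inv : nat -> option (nat * nat)) (iota 0 N)) _
    (fun t => box_vol_ge0 _ _ ((hF t.1).1 t.2)) (fun k => (hF k).2.2).
  exact/(pmap_uniq (@pickle_invK _))/iota_uniq.
exact/(le_trans sumM)/sum_geom_half/ltW.
Qed.

Lemma null_bigcup {T : countType} {P : T -> set 'rV[R]_p} :
  (forall t, lebesgue_null (P t)) -> lebesgue_null (\bigcup_t P t).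
Proof.
move=> nP; pose S k := if (pickle_inv k : option T) is Some t then P t else set0.
apply: (@null_sub _ (\bigcup_k S k)).
  by move=> x [t _ xt]; exists (pickle t) => //; rewrite /S pickleK_inv.
apply: null_bigcup_nat => k; rewrite /S.
by case: pickle_inv => [t|]; [exact: nP|exact: null_set0].
Qed.

End NullSets.

(* In dimension 0 every box has volume 1 (an empty product), so no set is null. *)
Lemma not_null_dim0 {R : realType} {S : set 'rV[R]_0} : ~ lebesgue_null S.
Proof.
move=> nS; have [a [b [_ [_ vol]]]] := nS (1 / 2) (divr_gt0 ltr01 (ltr0Sn R 1)).
by have := vol 1%N; rewrite big_ord1 /box_vol big_ord0; lra.
Qed.

Section LipschitzGraphs.
Context {R : realType} {p : nat}.

Lemma exists_small_step (c eps : R) : 0 <= c -> 0 < eps ->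
  exists2 h, 0 < h <= 1 & h * c <= eps.
Proof.
move=> c0 eps0; exists (Num.min 1 (eps / (c + 1))).
  by rewrite lt_min ltr01 divr_gt0 ?ltr_wpDl // ge_min lexx.
apply: (@le_trans _ _ (eps / (c + 1) * c)).
  by rewrite ler_wpM2r // ge_min lexx orbT.
by rewrite mulrAC ler_pdivrMr ?ltr_wpDl // ler_wpM2l ?ltW // ltrDl.
Qed.

Lemma grid_index (R1 h v : R) : 0 < h -> `|v| <= R1 ->
  let k := Num.trunc ((v + R1) / h) in
  (k < (Num.trunc (2 * R1 / h)).+1)%N /\
  - R1 + k%:R * h <= v <= - R1 + k%:R * h + h.
Proof.
move=> h0; rewrite ler_norml => /andP [vlo vhi] k.
have k0 : 0 <= (v + R1) / h by apply: divr_ge0; [lra|exact: ltW].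
split.
  by rewrite ltnS le_truncn // ler_pM2r ?invr_gt0 //; lra.
have /andP [kle klt] := truncn_itv k0.
move: kle klt; rewrite -/k ler_pdivlMr // ltr_pdivrMr // -natr1 mulrDl mul1r.
by move=> kle klt; apply/andP; split; lra.
Qed.

Lemma grid_length (R1 h : R) : 0 <= R1 -> 0 < h -> h <= 1 ->
  (Num.trunc (2 * R1 / h)).+1%:R * h <= 2 * R1 + 1.
Proof.
move=> R10 h0 h1.
have /andP [kle _] := truncn_itv (divr_ge0 (mulr_ge0 (ler0n R 2) R10) (ltW h0)).
rewrite -natr1 mulrDl mul1r.
by move: kle; rewrite ler_pdivlMr // => kle; lra.
Qed.

Lemma sum_cells_prod (m : nat) (i : 'I_p) (c h : R) :
  \sum_(cc : {ffun 'I_p -> 'I_m.+1})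
    \prod_j (if j == i then (if cc j == ord0 then c else 0) else h) =
  c * (m.+1%:R * h) ^+ p.-1.
Proof.
rewrite -(bigA_distr_bigA (fun j (k : 'I_m.+1) =>
  if j == i then (if k == ord0 then c else 0) else h)) /=.
rewrite (bigD1 i) //= eqxx (bigD1 ord0) //= big1 ?addr0 => [|k /negbTE -> //].
rewrite (eq_bigr (fun=> m.+1%:R * h)) => [|j /negbTE ->]; last first.
  by rewrite sumr_const card_ord mulr_natl.
by rewrite prodr_const cardC1 card_ord.
Qed.

(* The cells are indexed by all
   functions 'I_p -> cell index; those whose i-th index is not 0 carry a
   degenerate box, which makes the total volume factor as a product. *)
Lemma flat_cell_cover (S : set 'rV[R]_p) (i : 'I_p) (Rb h W : R) :
  0 < h -> 0 <= W -> (forall x, S x -> forall j, `|x ord0 j| <= Rb) ->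
  (forall x y, S x -> S y -> (forall j, j != i -> `|y ord0 j - x ord0 j| <= h) ->
     `|y ord0 i - x ord0 i| <= W) ->
  let m := Num.trunc (2 * Rb / h) in
  exists a b : {ffun 'I_p -> 'I_m.+1} -> 'rV[R]_p,
    [/\ forall cc j, a cc ord0 j <= b cc ord0 j,
        S `<=` \bigcup_(cc in [set: {ffun 'I_p -> 'I_m.+1}]) box (a cc) (b cc) &
        \sum_cc box_vol (a cc) (b cc) = 2 * W * (m.+1%:R * h) ^+ p.-1].
Proof.
move=> h0 W0 Sb Sflat m; pose lo (k : 'I_m.+1) := - Rb + k%:R * h.
pose incell (cc : {ffun 'I_p -> 'I_m.+1}) (y : 'rV[R]_p) :=
  forall j, j != i -> lo (cc j) <= y ord0 j <= lo (cc j) + h.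
have cell_of x : S x ->
    exists2 cc : {ffun 'I_p -> 'I_m.+1}, cc i = ord0 & incell cc x.
  move=> Sx; exists [ffun j => if j == i then ord0
                       else inord (Num.trunc ((x ord0 j + Rb) / h))].
    by rewrite ffunE eqxx.
  move=> j /negbTE ji; rewrite /lo ffunE ji.
  by have [km kcell] := grid_index Rb h (x ord0 j) h0 (Sb x Sx j); rewrite inordK.
have /choice [s hs] : forall cc, exists y,
    (exists z, S z /\ incell cc z) -> S y /\ incell cc y.
  move=> cc; have [[z hz]|nz] := pselect (exists z, S z /\ incell cc z).
    by exists z.
  by exists 0 => /nz.
pose a (cc : {ffun 'I_p -> 'I_m.+1}) : 'rV[R]_p := \row_j (if j == i then
   (if cc i == ord0 then s cc ord0 i - W else 0) else lo (cc j)).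
pose b (cc : {ffun 'I_p -> 'I_m.+1}) : 'rV[R]_p := \row_j (if j == i then
   (if cc i == ord0 then s cc ord0 i + W else 0) else lo (cc j) + h).
exists a, b; split.
- move=> cc j; rewrite !mxE; case: eqP => _; last by rewrite lerDl ltW.
  by case: ifP => _ //; rewrite lerD2l -subr_ge0 opprK addr_ge0.
- move=> x Sx; have [cc cci cx] := cell_of x Sx.
  have [Ss cs] := hs cc (ex_intro _ x (conj Sx cx)).
  exists cc => // j; rewrite !mxE; case: eqP => [->|/eqP ji]; last exact: cx.
  have near k : k != i -> `|x ord0 k - s cc ord0 k| <= h.
    move=> ki; have /andP [x1 x2] := cx k ki; have /andP [s1 s2] := cs k ki.
    by rewrite ler_norml; apply/andP; split; lra.
  move: (Sflat _ _ Ss Sx near); rewrite cci eqxx ler_norml => /andP [f1 f2].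
  by apply/andP; split; lra.
rewrite -(sum_cells_prod m i); apply: eq_bigr => cc _; apply: eq_bigr => j _.
rewrite !mxE; case: eqP => [->|_]; last by ring.
by case: (cc i == ord0); ring.
Qed.

(* A bounded set which is a Lipschitz graph over the coordinates other than i
   is null: it is (L (p - 1) h)-flat at every scale h. *)
Lemma lipschitz_graph_null (S : set 'rV[R]_p) (i : 'I_p) (Rb L : R) :
  0 <= Rb -> 0 <= L -> (forall x, S x -> forall j, `|x ord0 j| <= Rb) ->
  (forall x y, S x -> S y ->
     `|y ord0 i - x ord0 i| <= L * \sum_(j | j != i) `|y ord0 j - x ord0 j|) ->
  lebesgue_null S.
Proof.
move=> Rb0 L0 Sb Slip.
have p_gt0 : (0 < p)%N := leq_ltn_trans (leq0n i) (ltn_ord i).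
apply: null_of_finite_covers => // eps eps0.
pose c := 2 * L * p.-1%:R * (2 * Rb + 1) ^+ p.-1.
have c0 : 0 <= c by rewrite !mulr_ge0 ?exprn_ge0 ?addr_ge0 ?mulr_ge0.
have [h /andP [h0 h1] hc] := exists_small_step c eps c0 eps0.
pose W := L * p.-1%:R * h; have W0 : 0 <= W by rewrite !mulr_ge0 // ltW.
have Sflat x y : S x -> S y -> (forall j, j != i -> `|y ord0 j - x ord0 j| <= h) ->
    `|y ord0 i - x ord0 i| <= W.
  move=> Sx Sy near; apply: le_trans (Slip x y Sx Sy) _.
  rewrite /W -mulrA ler_wpM2l //.
  have -> : p.-1%:R * h = \sum_(j | j != i) h.
    by rewrite sumr_const cardC1 card_ord mulr_natl.
  by apply: ler_sum => j /near.
have [a [b [ab cov vol]]] := flat_cell_cover S i Rb h W h0 W0 Sb Sflat.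
exists {ffun 'I_p -> 'I_(Num.trunc (2 * Rb / h)).+1}, a, b; split=> //; split=> //.
rewrite vol; apply: le_trans hc; rewrite [h * c]mulrC /c /W.
have -> : 2 * L * p.-1%:R * (2 * Rb + 1) ^+ p.-1 * h =
          2 * (L * p.-1%:R * h) * (2 * Rb + 1) ^+ p.-1 by ring.
apply: ler_wpM2l; first exact: mulr_ge0.
rewrite lerXn2r ?nnegrE ?mulr_ge0 ?addr_ge0 ?(ltW h0) //; first lra.
exact: grid_length.
Qed.

End LipschitzGraphs.

(* Squared Euclidean distance; the minimizer of the distance to a set is also
   the minimizer of sqd. *)
Definition sqd (R : realType) (p : nat) (x y : 'rV[R]_p) : R :=
  \sum_(j < p) (x ord0 j - y ord0 j) ^+ 2.
Arguments sqd {R p}.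

Section NearestPoints.
Context {R : realType} {p : nat}.
Implicit Types (x y a b : 'rV[R]_p) (A B : set 'rV[R]_p).

Lemma sqd_ge0 x y : 0 <= sqd x y.
Proof. by apply: sumr_ge0 => j _; exact: sqr_ge0. Qed.

Lemma sqd_continuous x : continuous (sqd x).
Proof.
apply: continuous_big => [|j _]; first exact: add_continuous.
move=> y; apply: (@continuous_comp _ _ _ (fun y : 'rV[R]_p => x ord0 j - y ord0 j)
                                       (fun t : R => t ^+ 2)).
  by apply: continuousB; [exact: cst_continuous|exact: coord_continuous].
exact: exprn_continuous.
Qed.

Lemma exists_nearest x A : A !=set0 -> compact A ->
  exists a, A a /\ forall a', A a' -> sqd x a <= sqd x a'.
Proof.
move=> A0 cA; have [a Aa amin] :=
  compact_EVT_min A0 cA (continuous_subspaceT (@sqd_continuous x)).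
by exists a; split => [|a' Aa']; [rewrite inE in Aa|apply: amin; rewrite inE].
Qed.

Lemma setdist_sqr A x a : A a -> (forall a', A a' -> sqd x a <= sqd x a') ->
  setdist x A ^+ 2 = sqd x a.
Proof.
move=> Aa amin; suff -> : setdist x A = Num.sqrt (sqd x a).
  by rewrite sqr_sqrtr // sqd_ge0.
apply/le_anti/andP; split.
  by apply: ge_inf; [exists 0 => _ [y _ <-]; exact: sqrtr_ge0|exists a].
apply: lb_le_inf; first by exists (Num.sqrt (sqd x a)), a.
by move=> _ [y Ay <-]; rewrite /edist ler_sqrt ?sqd_ge0 ?amin.
Qed.

Lemma sqd_diff_increment x y a b :
  (sqd y a - sqd y b) - (sqd x a - sqd x b) =
  2 * \sum_j (y ord0 j - x ord0 j) * (b ord0 j - a ord0 j).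
Proof. by rewrite /sqd mulr_sumr -!sumrB; apply: eq_bigr => j _; ring. Qed.

End NearestPoints.

Lemma coord_bound_of_dot (R : realType) (p : nat) (d w : 'I_p -> R) (e : R)
    (i : 'I_p) :
  0 < e -> 4 * e <= `|w i| ->
  `|\sum_j d j * w j| <= 2 * e * \sum_j `|d j| ->
  `|d i| <= (\sum_j `|w j| + 2 * e) / (2 * e) * \sum_(j | j != i) `|d j|.
Proof.
move=> e0 wi dw; set M := \sum_j `|w j|; set P := \sum_(j | j != i) `|d j|.
have P0 : 0 <= P by exact: sumr_ge0.
have M0 : 0 <= M by exact: sumr_ge0.
have others : `|\sum_(j | j != i) d j * w j| <= M * P.
  apply: le_trans (ler_norm_sum _ _ _) _; rewrite /P mulr_sumr.
  apply: ler_sum => j _; rewrite normrM mulrC ler_wpM2r //.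
  by rewrite /M (bigD1 j) //= lerDl sumr_ge0.
move: dw; rewrite (bigD1 i) //= [X in _ <= _ * X](bigD1 i) //= -/P => dw.
have main : `|d i| * `|w i| <= 2 * e * (`|d i| + P) + M * P.
  have := ler_normB (d i * w i + \sum_(j | j != i) d j * w j)
                    (\sum_(j | j != i) d j * w j).
  by rewrite addrK normrM; lra.
have big_i : 4 * e * `|d i| <= `|d i| * `|w i| by rewrite mulrC ler_wpM2l.
by rewrite mulrAC ler_pdivlMr ?mulr_gt0 //; nra.
Qed.

Section SeparatedCells.
Context {R : realType} {p : nat}.

Lemma floor_cell (v e : R) : 0 < e -> `|v - (Num.floor (v / e))%:~R * e| <= e.
Proof.
move=> e0; have lo := floor_le (v / e); have := floorD1_gt (v / e).
rewrite intrD; move: lo; set k : R := (Num.floor (v / e))%:~R.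
rewrite ler_pdivlMr // ltr_pdivrMr // mulrDl mul1r => lo hi.
by rewrite ler_norml; apply/andP; split; lra.
Qed.

Lemma separated_cells (a b : 'rV[R]_p) : a != b ->
  exists (n : nat) (i : 'I_p) (za zb : {ffun 'I_p -> int}),
    let e := (n.+1%:R)^-1 in
    (forall j, `|a ord0 j - (za j)%:~R * e| <= e) /\
    (forall j, `|b ord0 j - (zb j)%:~R * e| <= e) /\
    4 * e <= `|(zb i)%:~R * e - (za i)%:~R * e|.
Proof.
move=> ab; have [i abi] : exists i, a ord0 i != b ord0 i.
  apply/existsP; apply: contraR ab; rewrite negb_exists => /forallP same.
  by apply/eqP/rowP => j; apply/eqP; have := same j; rewrite negbK.
set cd := `|b ord0 i - a ord0 i|.
have cd0 : 0 < cd by rewrite normr_gt0 subr_eq0 eq_sym.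
pose n := Num.trunc (6 / cd); pose e : R := (n.+1%:R)^-1.
have e0 : 0 < e by rewrite invr_gt0 ltr0Sn.
have small : 6 * e < cd.
  by have := truncnS_gt (6 / cd); rewrite ltr_pdivrMr // ltr_pdivrMr ?ltr0Sn // mulrC.
pose za : {ffun 'I_p -> int} := [ffun j => Num.floor (a ord0 j / e)].
pose zb : {ffun 'I_p -> int} := [ffun j => Num.floor (b ord0 j / e)].
have za_cell j : `|a ord0 j - (za j)%:~R * e| <= e by rewrite ffunE floor_cell.
have zb_cell j : `|b ord0 j - (zb j)%:~R * e| <= e by rewrite ffunE floor_cell.
exists n, i, za, zb; split => //; split => //; rewrite -/e.
have tri := ler_distD ((zb i)%:~R * e) (b ord0 i) (a ord0 i).
have tri' := ler_distD ((za i)%:~R * e) ((zb i)%:~R * e) (a ord0 i).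
have := za_cell i; have := zb_cell i; rewrite [`|a ord0 i - _|]distrC -/cd in tri *.
lra.
Qed.

End SeparatedCells.

Section DistanceGap.
Context {R : realType} {p : nat} {A B : set 'rV[R]_p}.
Context {ma mb : 'rV[R]_p -> 'rV[R]_p}.
Hypothesis ma_nearest : forall x, A (ma x) /\ forall a, A a -> sqd x (ma x) <= sqd x a.
Hypothesis mb_nearest : forall x, B (mb x) /\ forall b, B b -> sqd x (mb x) <= sqd x b.

Let gap x := sqd x (ma x) - sqd x (mb x).

Lemma gap_increment x y :
  gap y - gap x <= 2 * \sum_j (y ord0 j - x ord0 j) * (mb y ord0 j - ma x ord0 j).
Proof.
rewrite -sqd_diff_increment /gap.
have ya := (ma_nearest y).2 _ (ma_nearest x).1.
have xb := (mb_nearest x).2 _ (mb_nearest y).1.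
lra.
Qed.

Lemma gap_level_dot x y (alpha beta : 'I_p -> R) (e : R) : gap x = gap y ->
  (forall j, `|ma x ord0 j - alpha j| <= e) ->
  (forall j, `|mb y ord0 j - beta j| <= e) ->
  0 <= \sum_j (y ord0 j - x ord0 j) * (beta j - alpha j) +
       2 * e * \sum_j `|y ord0 j - x ord0 j|.
Proof.
move=> xy xa yb; have := gap_increment x y; rewrite xy subrr pmulr_rge0 // => inc.
apply: le_trans inc _; rewrite mulr_sumr -big_split /=; apply: ler_sum => j _.
set d := y ord0 j - x ord0 j.
suff : d * (mb y ord0 j - ma x ord0 j) - d * (beta j - alpha j) <= 2 * e * `|d| by lra.
rewrite -mulrBr; apply: le_trans (ler_norm _) _; rewrite normrM mulrC ler_wpM2r //.
move: (xa j) (yb j); rewrite !ler_norml => /andP [a1 a2] /andP [b1 b2].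
by apply/andP; split; lra.
Qed.

Lemma gap_level_lipschitz x y (alpha beta : 'I_p -> R) (e : R) (i : 'I_p) :
  0 < e -> gap x = gap y ->
  (forall j, `|ma x ord0 j - alpha j| <= e) ->
  (forall j, `|ma y ord0 j - alpha j| <= e) ->
  (forall j, `|mb x ord0 j - beta j| <= e) ->
  (forall j, `|mb y ord0 j - beta j| <= e) ->
  4 * e <= `|beta i - alpha i| ->
  `|y ord0 i - x ord0 i| <=
    (\sum_j `|beta j - alpha j| + 2 * e) / (2 * e) *
    \sum_(j | j != i) `|y ord0 j - x ord0 j|.
Proof.
move=> e0 xy xa ya xb yb sep; apply: coord_bound_of_dot => //.
have := gap_level_dot _ _ _ _ _ xy xa yb.
have := gap_level_dot _ _ _ _ _ (esym xy) ya xb.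
have -> : \sum_j (x ord0 j - y ord0 j) * (beta j - alpha j) =
          - \sum_j (y ord0 j - x ord0 j) * (beta j - alpha j).
  by rewrite -sumrN; apply: eq_bigr => j _; rewrite -mulNr opprB.
under [\sum_j `|x ord0 j - y ord0 j|]eq_bigr do rewrite distrC.
by rewrite ler_norml => h1 h2; apply/andP; split; lra.
Qed.

Definition level_piece (C : R)
    (t : nat * nat * 'I_p * {ffun 'I_p -> int} * {ffun 'I_p -> int}) : set 'rV[R]_p :=
  let: (n, Rn, i, za, zb) := t in let e : R := (n.+1%:R)^-1 in
  [set x | gap x = C /\ (forall j, `|x ord0 j| <= Rn%:R) /\
     (forall j, `|ma x ord0 j - (za j)%:~R * e| <= e) /\
     (forall j, `|mb x ord0 j - (zb j)%:~R * e| <= e) /\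
     4 * e <= `|(zb i)%:~R * e - (za i)%:~R * e|].

Lemma level_piece_null C t : lebesgue_null (level_piece C t).
Proof.
case: t => [[[[n Rn] i] za] zb] /=.
set e : R := (n.+1%:R)^-1; have e0 : 0 < e by rewrite invr_gt0 ltr0Sn.
set alpha := fun j => (za j)%:~R * e; set beta := fun j => (zb j)%:~R * e.
have L0 : 0 <= (\sum_j `|beta j - alpha j| + 2 * e) / (2 * e).
  by rewrite divr_ge0 ?addr_ge0 ?sumr_ge0 ?mulr_ge0 ?ltW.
apply: (lipschitz_graph_null _ i _ _ (ler0n _ Rn) L0); first by move=> x [_ []].
move=> x y [gx [_ [xa [xb _]]]] [gy [_ [ya [yb sep]]]].
by apply: gap_level_lipschitz => //; rewrite gx gy.
Qed.

(* When A and B are disjoint, the nearest points ma x and mb x differ, so the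
   pieces cover the level set. *)
Lemma level_set_cover C : A `&` B = set0 ->
  [set x | gap x = C] `<=` \bigcup_t level_piece C t.
Proof.
move=> AB x gapC; have : ma x != mb x.
  apply/eqP => mab; suff : (A `&` B) (ma x) by rewrite AB.
  by split; [exact: (ma_nearest x).1|rewrite mab; exact: (mb_nearest x).1].
move=> /separated_cells [n [i [za [zb [za_cell [zb_cell sep]]]]]].
exists (n, (Num.trunc (\sum_j `|x ord0 j|)).+1, i, za, zb) => //=.
split=> //; split=> [j|//]; apply/ltW/le_lt_trans/truncnS_gt.
by rewrite (bigD1 j) //= lerDl sumr_ge0.
Qed.

End DistanceGap.

Theorem mainTheorem17 (R : realType) (p : nat) (A B : set 'rV[R]_p) (C : R) :
  A !=set0 -> B !=set0 ->
  compact A -> compact B -> A `&` B = set0 ->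
  lebesgue_null A -> lebesgue_null B ->
  lebesgue_null [set x | setdist x A ^+ 2 - setdist x B ^+ 2 = C].
Proof.
case: p A B => [|p] A B A0 B0 cA cB AB nA _; first by case: (not_null_dim0 nA).
have [ma ma_nearest] := choice (fun x => exists_nearest x A A0 cA).
have [mb mb_nearest] := choice (fun x => exists_nearest x B B0 cB).
have gapE x : setdist x A ^+ 2 - setdist x B ^+ 2 = sqd x (ma x) - sqd x (mb x).
  by rewrite (setdist_sqr _ _ _ (ma_nearest x).1 (ma_nearest x).2)
             (setdist_sqr _ _ _ (mb_nearest x).1 (mb_nearest x).2).
apply: (null_sub _ (null_bigcup _ (level_piece_null ma_nearest mb_nearest C))) => //.
by move=> x /= /[!gapE]; exact: (level_set_cover ma_nearest mb_nearest C AB).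
Qed.
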